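(* Let $\mathbf B=(\mathbf b_1,\dots,\mathbf b_n)\in\mathbb Q^{d\times n}$ be a basis, $\gamma\ge2$, and $\mathbf B'=(\mathbf b_1',\dots,\mathbf b_n'):=A_{\mathbf B,\gamma}\mathbf B$. Then $\alpha_1\le\alpha_2\le\cdots\le\alpha_n$, and for every $i$, if $\alpha_i<\alpha_{i+1}$ then $\|\tilde{\mathbf b}_{i+1}'\|>(\gamma/2)\cdot\|\tilde{\mathbf b}_i'\|$.
   Context: Gram–Schmidt orthogonalization: $\tilde{\mathbf b}_1=\mathbf b_1$, $\tilde{\mathbf b}_i=\Pi_{\{\mathbf b_1,\dots,\mathbf b_{i-1}\}^\perp}(\mathbf b_i)$, where $\Pi_{S^\perp}$ is orthogonal projection onto the orthogonal complement of $\mathrm{span}(S)$; similarly $\tilde{\mathbf b}_i'$ for $\mathbf B'$. Define $\alpha_1=1$ and $\alpha_i=\max\{\alpha_{i-1},\lceil \|\tilde{\mathbf b}_i\|/(\gamma^i\|\mathbf b_1\|)\rceil\}$ for $i\ge2$. $A_{\mathbf B,\gamma}\in\mathbb R^{d\times d}$ is the unique linear map with $A_{\mathbf B,\gamma}\tilde{\mathbf b}_i=\tilde{\mathbf b}_i/\alpha_i$ for all $i$ and $A_{\mathbf B,\gamma}\mathbf y=\mathbf y$ for $\mathbf y\in\{\mathbf b_1,\dots,\mathbf b_n\}^\perp$. *)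

From HB Require Import structures.
From mathcomp Require Import all_boot all_order all_algebra.
From mathcomp Require Import reals.
Set Implicit Arguments. Unset Strict Implicit. Unset Printing Implicit Defensive.
Import Order.TTheory GRing.Theory Num.Theory.
Local Open Scope ring_scope.

Section Defs.
Variables (R : realType) (d n : nat).

Definition dotv (u v : 'cV[R]_d) : R := (u^T *m v) 0 0.
Definition normv (v : 'cV[R]_d) : R := Num.sqrt (dotv v v).

(* i-th column (0-based) of M, and 0 if i >= n *)
Definition colv (M : 'M[R]_(d, n)) (i : nat) : 'cV[R]_d :=
  match @insub _ (fun k => k < n)%N 'I_n i with Some j => col j M | None => 0 end.

(* list of the first k Gram-Schmidt vectors of the columns of M:
   the new vector is b_k minus its orthogonal projection onto the span of the
   previous Gram-Schmidt vectors (zero vectors contribute nothing since x/0 = 0) *)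
Fixpoint gs_seq (M : 'M[R]_(d, n)) (k : nat) : seq 'cV[R]_d :=
  match k with
  | 0 => [::]
  | k'.+1 =>
    let s := gs_seq M k' in
    rcons s (colv M k' - \sum_(u <- s) (dotv (colv M k') u / dotv u u) *: u)
  end.

(* Gram-Schmidt vector \tilde b_{i+1} (0-based index i) *)
Definition gs (M : 'M[R]_(d, n)) (i : nat) : 'cV[R]_d := nth 0 (gs_seq M i.+1) i.

(* alpha_{i+1} (0-based index i):
   alpha_1 = 1, alpha_i = max(alpha_{i-1}, ceil(||~b_i|| / (gamma^i ||b_1||))) *)
Fixpoint alpha (M : 'M[R]_(d, n)) (gamma : R) (i : nat) : int :=
  match i with
  | 0 => 1
  | i'.+1 => Num.max (alpha M gamma i')
               (Num.ceil (normv (gs M i) / (gamma ^+ i.+1 * normv (colv M 0))))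
  end.

Definition is_A_map (M : 'M[R]_(d, n)) (gamma : R) (A : 'M[R]_d) : Prop :=
  (forall i : 'I_n, A *m gs M i = ((alpha M gamma i)%:~R)^-1 *: gs M i) /\
  (forall y : 'cV[R]_d, (forall i : 'I_n, dotv y (col i M) = 0) -> A *m y = y).

End Defs.

(* Write r_i = |~b_i| / (gamma^i |b_1|), so that alpha_i = max(alpha_{i-1}, ceil r_i)
   is nondecreasing and r_i <= alpha_i.  Since A rescales each ~b_i by 1/alpha_i,
   the Gram-Schmidt vectors of A B are ~b_i / alpha_i.  If alpha_i < alpha_{i+1},
   then alpha_{i+1} = ceil r_{i+1} >= 2, hence r_{i+1} > alpha_{i+1} - 1 >= alpha_{i+1} / 2,
   i.e. |~b_{i+1}'| > gamma^{i+1} |b_1| / 2, while |~b_i'| <= gamma^i |b_1|. *)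
From HB Require Import structures.
From mathcomp Require Import all_boot all_order all_algebra.
From mathcomp Require Import reals.
From mathcomp Require Import ring lra.
Set Implicit Arguments. Unset Strict Implicit. Unset Printing Implicit Defensive.
Import Order.TTheory GRing.Theory Num.Theory.
Local Open Scope ring_scope.

Section InnerProduct.
Variables (R : realType) (d : nat).
Implicit Types (u v w : 'cV[R]_d).

Lemma dotvE u v : dotv u v = \sum_i u i 0 * v i 0.
Proof. by rewrite /dotv !mxE; apply: eq_bigr => i _; rewrite mxE. Qed.

Lemma dotvC u v : dotv u v = dotv v u.
Proof. by rewrite !dotvE; apply: eq_bigr => i _; rewrite mulrC. Qed.

Lemma dotvDl u v w : dotv (u + v) w = dotv u w + dotv v w.
Proof. by rewrite !dotvE -big_split; apply: eq_bigr => i _; rewrite mxE mulrDl. Qed.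

Lemma dotvZl (c : R) u w : dotv (c *: u) w = c * dotv u w.
Proof. by rewrite !dotvE mulr_sumr; apply: eq_bigr => i _; rewrite mxE mulrA. Qed.

Lemma dotvZr (c : R) u w : dotv u (c *: w) = c * dotv u w.
Proof. by rewrite dotvC dotvZl dotvC. Qed.

Lemma dotvBl u v w : dotv (u - v) w = dotv u w - dotv v w.
Proof. by rewrite dotvDl -scaleN1r dotvZl mulN1r. Qed.

Lemma dotv0r w : dotv w 0 = 0.
Proof. by rewrite -(scale0r 0) dotvZr mul0r. Qed.

Lemma dotv_suml (I : Type) (r : seq I) (P : pred I) (F : I -> 'cV[R]_d) w :
  dotv (\sum_(i <- r | P i) F i) w = \sum_(i <- r | P i) dotv (F i) w.
Proof.
elim/big_rec2: _ => [|i y1 y2 _ <-]; last by rewrite dotvDl.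
by rewrite dotvC dotv0r.
Qed.

Lemma dotv_eq0 u : (dotv u u == 0) = (u == 0).
Proof.
apply/eqP/eqP => [|->]; last exact: dotv0r.
rewrite dotvE => /eqP; rewrite psumr_eq0 => [/allP u0|i _]; last first.
  by rewrite -expr2 sqr_ge0.
apply/matrixP => i j; rewrite (ord1 j) mxE.
by have /implyP/(_ isT) := u0 i (mem_index_enum i); rewrite mulf_eq0 orbb => /eqP.
Qed.

Lemma normv_ge0 u : 0 <= normv u.
Proof. exact: sqrtr_ge0. Qed.

Lemma normvZ (c : R) u : normv (c *: u) = `|c| * normv u.
Proof. by rewrite /normv dotvZl dotvZr mulrA -expr2 sqrtrM ?sqr_ge0 // sqrtr_sqr. Qed.

Lemma dotv_sum_orthogonal k (w : nat -> 'cV[R]_d) (f : nat -> R) j :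
  (forall l m, (m < l < k)%N -> dotv (w l) (w m) = 0) -> (j < k)%N ->
  dotv (\sum_(l < k) f l *: w l) (w j) = f j * dotv (w j) (w j).
Proof.
move=> orth jk; rewrite dotv_suml (bigD1 (Ordinal jk)) //= big1 ?addr0 ?dotvZl //.
move=> l /negbTE lj; rewrite dotvZl.
have [lt|gt] := ltnP l j; first by rewrite dotvC orth ?lt ?mulr0.
rewrite leq_eqVlt in gt; case/orP: gt => [/eqP E|gt].
  by move: lj; rewrite -(inj_eq val_inj) /= E eqxx.
by rewrite orth ?gt ?ltn_ord ?mulr0.
Qed.

End InnerProduct.

Section GramSchmidt.
Variables (R : realType) (d n : nat).
Implicit Types (M : 'M[R]_(d, n)) (A : 'M[R]_d).

Definition gs_coef M k j : R :=
  dotv (colv M k) (gs M j) / dotv (gs M j) (gs M j).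

Lemma size_gs_seq M k : size (gs_seq M k) = k.
Proof. by elim: k => //= k IH; rewrite size_rcons IH. Qed.

Lemma nth_gs_seq M k i : (i < k)%N -> nth 0 (gs_seq M k) i = gs M i.
Proof.
elim: k => // k IH; rewrite ltnS leq_eqVlt => /orP[/eqP->//|ik].
by rewrite /= nth_rcons size_gs_seq ik IH.
Qed.

Lemma gsE M k : gs M k = colv M k - \sum_(j < k) gs_coef M k j *: gs M j.
Proof.
rewrite /gs /= nth_rcons size_gs_seq ltnn eqxx; congr (_ - _).
rewrite (big_nth 0) size_gs_seq big_mkord; apply: eq_bigr => j _.
by rewrite nth_gs_seq.
Qed.

Lemma colvE M k : colv M k = gs M k + \sum_(j < k) gs_coef M k j *: gs M j.
Proof. by rewrite gsE subrK. Qed.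

Lemma gs0 M : gs M 0 = colv M 0.
Proof. by rewrite gsE big_ord0 subr0. Qed.

Lemma gs_orthogonal M k j : (j < k)%N -> dotv (gs M k) (gs M j) = 0.
Proof.
elim/ltn_ind: k j => k IH j jk.
rewrite {1}gsE dotvBl (dotv_sum_orthogonal _ _ jk); last first.
  by move=> l m /andP[ml lk]; exact: IH.
have [g0|nz] := eqVneq (gs M j) 0; first by rewrite g0 !dotv0r mulr0 subr0.
by rewrite /gs_coef divfK ?subrr ?dotv_eq0.
Qed.

Lemma colv_mull A M k : (k < n)%N -> colv (A *m M) k = A *m colv M k.
Proof. by move=> kn; rewrite /colv insubT /= !colE mulmxA. Qed.

Lemma gs_mulmx_eigen A M (s : nat -> R) :
  (forall j, (j < n)%N -> A *m gs M j = s j *: gs M j) ->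
  (forall j, s j != 0) ->
  forall k, (k < n)%N -> gs (A *m M) k = s k *: gs M k.
Proof.
move=> As s0; elim/ltn_ind => k IH kn.
have AMk : colv (A *m M) k =
    s k *: gs M k + \sum_(j < k) (gs_coef M k j * s j) *: gs M j.
  rewrite colv_mull // colvE mulmxDr As // mulmx_sumr; congr (_ + _).
  apply: eq_bigr => j _.
  by rewrite -scalemxAr As ?(ltn_trans (ltn_ord j)) // scalerA.
rewrite gsE AMk -[RHS]addr0 -addrA; congr (_ + _); apply/eqP; rewrite subr_eq0; apply/eqP.
apply: eq_bigr => j _; have jn := ltn_trans (ltn_ord j) kn.
rewrite [gs_coef (A *m M) k j]/gs_coef IH // AMk scalerA.
have [g0|nz] := eqVneq (gs M j) 0; first by rewrite g0 !scaler0.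
rewrite !dotvZr !dotvZl dotvDl dotvZl gs_orthogonal // mulr0 add0r.
rewrite (@dotv_sum_orthogonal _ _ _ (gs M) (fun l => gs_coef M k l * s l) _ _ (ltn_ord j)); last first.
  by move=> l m /andP[ml _]; exact: gs_orthogonal.
rewrite -dotv_eq0 in nz; congr (_ *: _); move: (s0 j) nz.
by rewrite /gs_coef; set x := s j; set D := dotv _ _ => x0 D0; field; rewrite x0 D0.
Qed.

End GramSchmidt.

Section Alpha.
Variables (R : realType) (d n : nat) (M : 'M[R]_(d, n)) (g : R).

(* r_{i+1} of the header (indices are 0-based); it is 0 when b_1 = 0, as x / 0 = 0. *)
Definition gs_ratio i : R := normv (gs M i) / (g ^+ i.+1 * normv (colv M 0)).

Lemma alphaS i : alpha M g i.+1 = Num.max (alpha M g i) (Num.ceil (gs_ratio i.+1)).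
Proof. by []. Qed.

Lemma alpha_ge1 i : 1 <= alpha M g i.
Proof. by elim: i => //= i IH; rewrite le_max IH. Qed.

Lemma alpha_gt0 i : 0 < (alpha M g i)%:~R :> R.
Proof. by rewrite ltr0z (lt_le_trans _ (alpha_ge1 i)). Qed.

Lemma alpha_leS i : alpha M g i <= alpha M g i.+1.
Proof. by rewrite alphaS le_max lexx. Qed.

Lemma gs_ratio_le_alpha i : 1 <= g -> gs_ratio i <= (alpha M g i)%:~R.
Proof.
move=> g1; case: i => [|i]; last first.
  by rewrite -ceil_le_int alphaS le_max lexx orbT.
rewrite /gs_ratio gs0 expr1 /=.
have [N0|Nnz] := eqVneq (normv (colv M 0)) 0; first by rewrite N0 mulr0 invr0 mulr0.
by rewrite invfM mulrA mulrAC divff // mul1r invf_le1 // (lt_le_trans ltr01).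
Qed.

Lemma alpha_ltS_ceil i : alpha M g i < alpha M g i.+1 ->
  alpha M g i.+1 = Num.ceil (gs_ratio i.+1).
Proof. by rewrite alphaS comparable_lt_max ?ltxx //= => /ltW /max_r. Qed.

End Alpha.

Lemma halved_ratio_lt (R : realType) (g Q u v a c : R) :
  0 < g -> 0 < Q -> 0 < a -> 2 <= c -> u / Q <= a -> c - 1 < v / (g * Q) ->
  g / 2 * (a^-1 * u) < c^-1 * v.
Proof.
move=> g0 Q0 a0 c2; have gQ0 : 0 < g * Q by rewrite mulr_gt0.
rewrite ler_pdivrMr // ltr_pdivlMr // => uQ vgQ.
have ua : a^-1 * u <= Q by rewrite ler_pdivrMl // mulrC.
have gu : g / 2 * (a^-1 * u) <= g / 2 * Q by rewrite ler_wpM2l // divr_ge0 // ltW.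
apply: le_lt_trans gu _; rewrite ltr_pdivlMl ?(lt_le_trans _ c2) //.
by nra.
Qed.

Lemma alpha_gap (R : realType) (d n : nat) (M : 'M[R]_(d, n)) (g : R) (A : 'M[R]_d) :
  2 <= g -> is_A_map M g A ->
  (forall i : nat, (i.+1 < n)%N -> alpha M g i <= alpha M g i.+1) /\
  (forall i : nat, (i.+1 < n)%N -> alpha M g i < alpha M g i.+1 ->
     g / 2 * normv (gs (A *m M) i) < normv (gs (A *m M) i.+1)).
Proof.
move=> g2 [Ags _]; split=> [i _|i iSn lt_alpha]; first exact: alpha_leS.
have g0 : 0 < g by apply: lt_le_trans g2.
pose s j := ((alpha M g j)%:~R : R)^-1.
have s0 j : s j != 0 by rewrite invr_eq0 gt_eqF ?alpha_gt0.
have gsAM := gs_mulmx_eigen (s := s) (fun j jn => Ags (Ordinal jn)) s0.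
rewrite gsAM ?(ltn_trans _ iSn) // gsAM // !normvZ !gtr0_norm ?invr_gt0 ?alpha_gt0 //.
have ceilE := alpha_ltS_ceil lt_alpha.
have c2 : 2 <= alpha M g i.+1.
  by apply: le_trans (_ : alpha M g i + 1 <= _); rewrite ?lerD2r ?alpha_ge1 ?lezD1.
have ratio_gt : (alpha M g i.+1)%:~R - 1 < gs_ratio M g i.+1.
  by rewrite ceilE -[1]/(1%:~R) -intrB ceilB1_lt.
have N0 : 0 < normv (colv M 0).
  rewrite lt_def normv_ge0 andbT; apply: contraTneq ratio_gt => N0.
  by rewrite /gs_ratio N0 mulr0 invr0 mulr0 -leNgt subr_ge0 ler1z (le_trans _ c2).
apply: (halved_ratio_lt (Q := g ^+ i.+1 * normv (colv M 0))) => //.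
- by rewrite mulr_gt0 // exprn_gt0.
- exact: alpha_gt0.
- have c2R : (2%:~R : R) <= (alpha M g i.+1)%:~R by rewrite ler_int.
  exact: c2R.
- by apply: gs_ratio_le_alpha; lra.
- by rewrite mulrA -exprS; move: ratio_gt; rewrite /gs_ratio.
Qed.

Theorem mainTheorem12 (R : realType) (d n : nat) (B : 'M[rat]_(d, n))
    (gamma : R) (A : 'M[R]_d) :
  \rank B = n ->
  2 <= gamma ->
  is_A_map (map_mx ratr B) gamma A ->
  (forall i : nat, (i.+1 < n)%N ->
     alpha (map_mx ratr B) gamma i <= alpha (map_mx ratr B) gamma i.+1) /\
  (forall i : nat, (i.+1 < n)%N ->
     alpha (map_mx ratr B) gamma i < alpha (map_mx ratr B) gamma i.+1 ->
     gamma / 2 * normv (gs (A *m map_mx ratr B) i)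
       < normv (gs (A *m map_mx ratr B) i.+1)).
Proof. by move=> _; exact: alpha_gap. Qed.
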